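(* Let $G$ be a group containing commuting elements $A$ and $B$ whose centralisers $C_G(A)$ and $C_G(B)$ are both different from $G$, are both non-soluble, and are not equal to each other. Let $\mathbb{F}$ be an algebraically closed field and suppose there is a faithful representation of $G$ into $GL(3,\mathbb{F})$. Then after conjugating the image in $GL(3,\mathbb{F})$, the images of $A$ and $B$ are $$A=\begin{pmatrix}\lambda&0&0\\0&\lambda&0\\0&0&\mu\end{pmatrix},\qquad B=\begin{pmatrix}x&0&0\\0&y&0\\0&0&x\end{pmatrix}$$ for some non-zero scalars $\lambda,\mu,x,y\in\mathbb{F}$ with $\lambda\neq\mu$ and $x\neq y$. *)

From HB Require Import structures.
From mathcomp Require Import all_boot all_order all_algebra.
Set Implicit Arguments. Unset Strict Implicit. Unset Printing Implicit Defensive.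
Import GRing.Theory.
Local Open Scope ring_scope.

Record group := Group {
  carrier :> Type;
  gmul : carrier -> carrier -> carrier;
  gone : carrier;
  ginv : carrier -> carrier;
  gmulA : forall x y z, gmul x (gmul y z) = gmul (gmul x y) z;
  gmul1g : forall x, gmul gone x = x;
  gmulg1 : forall x, gmul x gone = x;
  gmulVg : forall x, gmul (ginv x) x = gone;
  gmulgV : forall x, gmul x (ginv x) = gone
}.

Section GroupDefs.
Variable G : group.

Definition is_subgroup (H : G -> Prop) : Prop :=
  H (gone G) /\ (forall x y, H x -> H y -> H (gmul x y)) /\ (forall x, H x -> H (ginv x)).

Definition gen (S : G -> Prop) : G -> Prop :=
  fun z => forall K, is_subgroup K -> (forall s, S s -> K s) -> K z.

Definition gcomm (a b : G) : G := gmul (gmul (ginv a) (ginv b)) (gmul a b).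

Definition derived (H : G -> Prop) : G -> Prop :=
  gen (fun z => exists a b, H a /\ H b /\ z = gcomm a b).

Fixpoint derived_series (n : nat) (H : G -> Prop) : G -> Prop :=
  match n with
  | 0 => H
  | n'.+1 => derived (derived_series n' H)
  end.

Definition soluble (H : G -> Prop) : Prop :=
  exists n, forall z, derived_series n H z -> z = gone G.

Definition centraliser (a : G) : G -> Prop := fun g => gmul g a = gmul a g.

End GroupDefs.

Definition faithful_rep (G : group) (F : fieldType) (n : nat)
  (rho : G -> 'M[F]_n) : Prop :=
  (forall g, rho g \in unitmx) /\
  (forall g h, rho (gmul g h) = rho g *m rho h) /\
  injective rho.

(* Write X and Y for the images of A and B.  Kernels and images of polynomials
   in X are stable under every matrix commuting with X.  Over an algebraically
   closed field, a non-scalar 3 x 3 matrix X that is not similar to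
   diag(l, l, m) has such a line inside such a plane (kernels of X - l,
   (X - l)^2 and X - m, or the image of a square-zero X - l).  In a basis
   adapted to this flag the whole centraliser of A is lower triangular, and
   lower triangular subgroups of GL_3 have derived length at most 3.  So
   X ~ diag(l, l, m) and Y ~ diag(x, x, y).  The lines im(X - l) and
   im(Y - x) are stable under the other matrix.  If one of them is an
   eigenline for both m and y, then Y - x is a multiple of X - l and the two
   centralisers coincide.  Otherwise these two lines and a common vector of
   ker(X - l) and ker(Y - x) diagonalise X and Y as stated. *)

From HB Require Import structures.
From mathcomp Require Import all_boot all_order all_algebra zify.
Import GRing.Theory.
Local Open Scope ring_scope.

Set Implicit Arguments. Unset Strict Implicit. Unset Printing Implicit Defensive.

Section GroupFacts.
Variable G : group.
Implicit Types a x y : G.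

Lemma ginv_uniq x y : gmul x y = gone G -> ginv x = y.
Proof. by move=> xy1; rewrite -[ginv x]gmulg1 -xy1 gmulA gmulVg gmul1g. Qed.

Lemma ginvK x : ginv (ginv x) = x.
Proof. exact/ginv_uniq/gmulVg. Qed.

Lemma ginv1 : ginv (gone G) = gone G.
Proof. exact/ginv_uniq/gmul1g. Qed.

Lemma ginvM x y : ginv (gmul x y) = gmul (ginv y) (ginv x).
Proof. by apply: ginv_uniq; rewrite -gmulA [gmul y _]gmulA gmulgV gmul1g gmulgV. Qed.

Lemma ginv_gcomm x y : ginv (gcomm x y) = gcomm y x.
Proof. by rewrite /gcomm !ginvM !ginvK. Qed.

Lemma centraliser_subgroup a : is_subgroup (centraliser a).
Proof.
rewrite /centraliser; split; first by rewrite gmul1g gmulg1.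
split=> [x y xa ya | x xa]; first by rewrite -gmulA ya !gmulA xa.
by rewrite -[gmul _ a]gmulg1 -(gmulgV x) !gmulA -[gmul (gmul _ a) x]gmulA -xa
  gmulA gmulVg gmul1g.
Qed.

End GroupFacts.

Section FaithfulRep.
Variables (G : group) (F : fieldType) (n : nat) (rho : G -> 'M[F]_n).
Hypothesis rho_faithful : faithful_rep rho.

Lemma rep_unit g : rho g \in unitmx. Proof. by case: rho_faithful. Qed.

Lemma repM g h : rho (gmul g h) = rho g *m rho h.
Proof. by case: rho_faithful => _ []. Qed.

Lemma rep_inj : injective rho. Proof. by case: rho_faithful => _ []. Qed.

Lemma rep1 : rho (gone G) = 1%:M.
Proof.
have e : rho (gone G) *m rho (gone G) = 1%:M *m rho (gone G).
  by rewrite -repM gmul1g mul1mx.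
by rewrite -[LHS](mulmxK (rep_unit (gone G))) e mulmxK ?rep_unit.
Qed.

Lemma rep_centraliser a g : centraliser a g <-> comm_mx (rho g) (rho a).
Proof.
rewrite /centraliser /comm_mx -!repM.
by split=> [-> // | ga]; apply: rep_inj.
Qed.

Lemma faithful_rep_conj (Q : 'M[F]_n) :
  Q \in unitmx -> faithful_rep (fun g => Q *m rho g *m invmx Q).
Proof.
move=> Qu; have QVu : invmx Q \in unitmx by rewrite unitmx_inv.
split=> [g | ]; first by rewrite !unitmx_mul rep_unit Qu.
split=> [g h | g h]; first by rewrite repM !mulmxA mulmxKV.
by move/(can_inj (mulmxK QVu))/(can_inj (mulKmx Qu))/rep_inj.
Qed.

End FaithfulRep.

(** * Triangular subgroups of GL_3 are soluble *)

Section TriangularMatrices.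
Variables (R : comNzRingType) (n : nat).
Implicit Types M N : 'M[R]_n.

Lemma is_trig_mxM M N : is_trig_mx M -> is_trig_mx N -> is_trig_mx (M *m N).
Proof.
move=> /is_trig_mxP trM /is_trig_mxP trN; apply/is_trig_mxP => i j ij.
rewrite mxE big1 // => k _; have [/trM -> | ki] := ltnP i k; first by rewrite mul0r.
by rewrite trN ?mulr0 // (leq_ltn_trans ki ij).
Qed.

Lemma trig_mxM_diag M N i :
  is_trig_mx M -> is_trig_mx N -> (M *m N) i i = M i i * N i i.
Proof.
move=> /is_trig_mxP trM /is_trig_mxP trN.
rewrite mxE (bigD1 i) //= big1 ?addr0 // => k /negPf ki.
have [/trM -> | /trN -> | /val_inj ik] := ltngtP i k; rewrite ?mul0r ?mulr0 //.
by rewrite ik eqxx in ki.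
Qed.

Definition unitrig M := is_trig_mx M && [forall i, M i i == 1].

Lemma unitrig1 : unitrig 1%:M.
Proof. by rewrite /unitrig scalar_mx_is_trig; apply/forallP => i; rewrite mxE eqxx. Qed.

Lemma unitrigM M N : unitrig M -> unitrig N -> unitrig (M *m N).
Proof.
move=> /andP[trM /forallP dM] /andP[trN /forallP dN].
rewrite /unitrig is_trig_mxM //; apply/forallP => i.
by rewrite trig_mxM_diag // (eqP (dM i)) (eqP (dN i)) mulr1.
Qed.

Lemma trig_commutator_unitrig M' N' M N :
  is_trig_mx M' -> is_trig_mx N' -> is_trig_mx M -> is_trig_mx N ->
  M' *m M = 1%:M -> N' *m N = 1%:M -> unitrig (M' *m N' *m (M *m N)).
Proof.
move=> trM' trN' trM trN MM' NN'.
rewrite /unitrig !is_trig_mxM //; apply/forallP => i.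
rewrite !trig_mxM_diag ?is_trig_mxM // mulrACA.
rewrite -(trig_mxM_diag i trM' trM) -(trig_mxM_diag i trN' trN) MM' NN'.
by rewrite mxE eqxx mulr1.
Qed.

End TriangularMatrices.

Lemma ord3P (i : 'I_3) : [\/ i = 0, i = 1 | i = 2].
Proof.
case: i => [[|[|[|i]]] Hi] //; [apply: Or31 | apply: Or32 | apply: Or33];
  exact: val_inj.
Qed.

Section UnitriangularThree.
Variable R : comNzRingType.
Implicit Types M N : 'M[R]_3.

Lemma mulmx3E M N i j :
  (M *m N) i j = M i 0 * N 0 j + M i 1 * N 1 j + M i 2 * N 2 j.
Proof.
rewrite mxE !big_ord_recl big_ord0 addr0 addrA.
by congr (_ + _ + _); congr (_ * _); congr (_ _ _); apply/val_inj.
Qed.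

Lemma unitrig3_subdiagM M N : unitrig M -> unitrig N ->
  (M *m N) 1 0 = M 1 0 + N 1 0 /\ (M *m N) 2 1 = M 2 1 + N 2 1.
Proof.
move=> /andP[/is_trig_mxP trM /forallP dM] /andP[/is_trig_mxP trN /forallP dN].
rewrite !mulmx3E (trM 1 2) // (trN 0 1) //.
rewrite (eqP (dN 0)) (eqP (dM 1)) (eqP (dN 1)) (eqP (dM 2)).
by rewrite !(mulr0, mul0r, mulr1, mul1r, addr0, add0r).
Qed.

Definition trig3_level (k : nat) M : Prop :=
  match k with
  | 0 => is_trig_mx M
  | 1 => unitrig M
  | 2 => [/\ unitrig M, M 1 0 = 0 & M 2 1 = 0]
  | _ => M = 1%:M
  end.

Lemma trig3_level2_cornerM M N : trig3_level 2 M -> trig3_level 2 N ->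
  (M *m N) 2 0 = M 2 0 + N 2 0.
Proof.
move=> [/andP[_ /forallP dM] _ M21] [/andP[_ /forallP dN] N10 _].
rewrite mulmx3E M21 N10 (eqP (dN 0)) (eqP (dM 2)).
by rewrite !(mulr0, mul0r, mulr1, mul1r, addr0).
Qed.

Lemma trig3_level2_id M : trig3_level 2 M -> M 2 0 = 0 -> M = 1%:M.
Proof.
move=> [/andP[/is_trig_mxP trM /forallP dM] M10 M21] M20.
apply/matrixP => i j; rewrite mxE.
by case: (ord3P i) => ->; case: (ord3P j) => ->;
  rewrite ?M10 ?M21 ?M20 ?(trM 0 1) ?(trM 0 2) ?(trM 1 2) ?(eqP (dM _)).
Qed.

Lemma trig3_level1 k : trig3_level k 1%:M.
Proof.
case: k => [|[|[|k]]] //=; rewrite ?scalar_mx_is_trig ?unitrig1 //.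
by split; rewrite ?unitrig1 ?mxE.
Qed.

Lemma trig3_levelM k M N :
  trig3_level k M -> trig3_level k N -> trig3_level k (M *m N).
Proof.
case: k => [|[|[|k]]] /=; [exact: is_trig_mxM | exact: unitrigM | |].
  move=> [uM M10 M21] [uN N10 N21]; have [-> ->] := unitrig3_subdiagM uM uN.
  by split; rewrite ?unitrigM ?M10 ?N10 ?M21 ?N21 ?addr0.
by move=> -> ->; rewrite mul1mx.
Qed.

Lemma trig3_level_commutator k M' N' M N :
  trig3_level k M' -> trig3_level k N' -> trig3_level k M -> trig3_level k N ->
  M' *m M = 1%:M -> N' *m N = 1%:M -> trig3_level k.+1 (M' *m N' *m (M *m N)).
Proof.
case: k => [|[|[|k]]] /=; first exact: trig_commutator_unitrig.
- move=> uM' uN' uM uN MM' NN'.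
  have [e10 e21] := unitrig3_subdiagM uM' uM.
  have [f10 f21] := unitrig3_subdiagM uN' uN.
  rewrite MM' NN' !mxE /= in e10 e21 f10 f21.
  have [-> ->] := unitrig3_subdiagM (unitrigM uM' uN') (unitrigM uM uN).
  have [-> ->] := unitrig3_subdiagM uM' uN'; have [-> ->] := unitrig3_subdiagM uM uN.
  by split; rewrite ?unitrigM // addrACA -?e10 -?f10 -?e21 -?f21 addr0.
- move=> lM' lN' lM lN MM' NN'.
  have eM := trig3_level2_cornerM lM' lM; have eN := trig3_level2_cornerM lN' lN.
  rewrite MM' NN' !mxE /= in eM eN.
  have lMN' := trig3_levelM (k := 2) lM' lN'.
  have lMN := trig3_levelM (k := 2) lM lN.
  apply: trig3_level2_id; first exact: trig3_levelM lMN' lMN.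
  by rewrite !trig3_level2_cornerM // addrACA -eM -eN addr0.
- by move=> -> -> -> ->; rewrite !mul1mx.
Qed.

End UnitriangularThree.

Lemma trig_subgroup_soluble (G : group) (F : fieldType) (rho : G -> 'M[F]_3)
    (H : G -> Prop) :
  faithful_rep rho -> is_subgroup H -> (forall g, H g -> is_trig_mx (rho g)) ->
  soluble H.
Proof.
move=> rho_f [_ [_ HV]] Htrig.
pose lev k g := trig3_level k (rho g) /\ trig3_level k (rho (ginv g)).
have lev_subgroup k : is_subgroup (lev k).
  split; first by rewrite /lev ginv1 (rep1 rho_f); split; apply: trig3_level1.
  split=> [x y [x1 x2] [y1 y2] | x [x1 x2]]; last by rewrite /lev ginvK.
  by rewrite /lev ginvM !(repM rho_f); split; apply: trig3_levelM.
have derived_lev k g : derived_series k H g -> lev k g.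
  elim: k g => [|k IHk] g /=; first by move=> Hg; split; apply: Htrig; [|apply: HV].
  apply; first exact: lev_subgroup.
  move=> _ [x [y [/IHk[x1 x2] [/IHk[y1 y2] ->]]]].
  have inv z : rho (ginv z) *m rho z = 1%:M.
    by rewrite -(repM rho_f) gmulVg (rep1 rho_f).
  rewrite /lev ginv_gcomm /gcomm !(repM rho_f).
  by split; apply: trig3_level_commutator; rewrite ?inv ?ginvK.
exists 3 => g /derived_lev[g1 _]; apply: (rep_inj rho_f).
by rewrite g1 (rep1 rho_f).
Qed.

Definition commutant_trig (F : fieldType) n (X : 'M[F]_n) :=
  exists2 Q : 'M[F]_n, Q \in unitmx &
    forall Y, comm_mx X Y -> is_trig_mx (Q *m Y *m invmx Q).

Lemma commutant_trig_soluble (G : group) (F : fieldType) (rho : G -> 'M[F]_3) a :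
  faithful_rep rho -> commutant_trig (rho a) -> soluble (centraliser a).
Proof.
move=> rho_f [Q Qu QT].
apply: trig_subgroup_soluble (faithful_rep_conj rho_f Qu) (centraliser_subgroup a) _.
by move=> g /(rep_centraliser rho_f) ga; apply/QT/comm_mx_sym.
Qed.

(** * Flags stable under the commutant *)

Section Flags.
Variable F : fieldType.
Implicit Types X Y : 'M[F]_3.

Lemma mxrank_adds_gt m1 m2 n (A : 'M[F]_(m1, n)) (B : 'M[F]_(m2, n)) :
  ~~ (B <= A)%MS -> (\rank A < \rank (A + B)%MS)%N.
Proof.
move=> nBA; apply: rank_ltmx; rewrite ltmxE addsmxSl /=.
by apply: contra nBA; apply: submx_trans (addsmxSr A B).
Qed.

Lemma rank1_submx_rV m n (S : 'M[F]_(m, n)) (v : 'rV[F]_n) :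
  \rank S = 1 -> (v <= S)%MS -> v != 0 -> (S <= v)%MS.
Proof. by move=> rS vS v_nz; rewrite -(mxrank_leqif_sup vS).2 rank_rV v_nz rS. Qed.

Definition rows3 (v0 v1 v2 : 'rV[F]_3) : 'M[F]_3 :=
  \matrix_(i < 3) [:: v0; v1; v2]`_i.

Lemma rows3_unit (v0 v1 v2 : 'rV[F]_3) : v0 != 0 -> ~~ (v1 <= v0)%MS ->
  ~~ (v2 <= v0 + v1)%MS -> rows3 v0 v1 v2 \in unitmx.
Proof.
move=> v0_nz v1_v0 v2_v01; rewrite -row_free_unit /row_free eqn_leq rank_leq_col /=.
have sub_rows3 : (v0 + v1 + v2 <= rows3 v0 v1 v2)%MS.
  have rowQ (i : 'I_3) : ([:: v0; v1; v2]`_i <= rows3 v0 v1 v2)%MS.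
    by have := row_sub i (rows3 v0 v1 v2); rewrite rowK.
  by rewrite !addsmx_sub (rowQ 0) (rowQ 1) (rowQ 2).
apply: leq_trans (mxrankS sub_rows3); apply: leq_ltn_trans (mxrank_adds_gt v2_v01).
by apply: leq_ltn_trans (mxrank_adds_gt v1_v0); rewrite rank_rV v0_nz.
Qed.

Lemma rows3_trig (v0 v1 v2 : 'rV[F]_3) Y : rows3 v0 v1 v2 \in unitmx ->
  (v0 *m Y <= v0)%MS -> (v1 *m Y <= v0 + v1)%MS ->
  is_trig_mx (rows3 v0 v1 v2 *m Y *m invmx (rows3 v0 v1 v2)).
Proof.
set Q := rows3 v0 v1 v2 => Qu /sub_rVP[c v0Y] /sub_addsmxP[[u0 u1] /= v1Y].
have eQ i : row i Q *m invmx Q = delta_mx 0 i by rewrite -row_mul mulmxV ?row1.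
have Q0 : row 0 Q = v0 := rowK _ _; have Q1 : row 1 Q = v1 := rowK _ _.
have rowY0 : row 0 (Q *m Y *m invmx Q) = c *: delta_mx 0 0.
  by rewrite !row_mul Q0 v0Y -scalemxAl -Q0 eQ.
have rowY1 : row 1 (Q *m Y *m invmx Q) = u0 *m delta_mx 0 0 + u1 *m delta_mx 0 1.
  by rewrite !row_mul Q1 v1Y mulmxDl -!mulmxA -Q0 -Q1 !eQ.
have Me i j : (Q *m Y *m invmx Q) i j = row i (Q *m Y *m invmx Q) 0 j.
  by rewrite [RHS]mxE.
apply/is_trig_mxP => i j; rewrite Me.
case: (ord3P i) => ->; case: (ord3P j) => -> //= _;
  by rewrite ?rowY0 ?rowY1 !mxE ?big_ord1 ?mxE !eqE /= !mulr0 ?addr0.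
Qed.

Lemma rows3_diag (v0 v1 v2 : 'rV[F]_3) X d0 d1 d2 : rows3 v0 v1 v2 \in unitmx ->
  v0 *m X = d0 *: v0 -> v1 *m X = d1 *: v1 -> v2 *m X = d2 *: v2 ->
  rows3 v0 v1 v2 *m X *m invmx (rows3 v0 v1 v2) =
    diag_mx (\row_(i < 3) [:: d0; d1; d2]`_i).
Proof.
set Q := rows3 v0 v1 v2 => Qu X0 X1 X2; apply/row_matrixP => i.
have QX : row i Q *m X = [:: d0; d1; d2]`_i *: row i Q.
  by rewrite rowK; case: (ord3P i) => ->.
by rewrite !row_mul QX -scalemxAl -row_mul mulmxV // row1 row_diag_mx mxE.
Qed.

Lemma flag_commutant_trig X m1 m2 (S1 : 'M[F]_(m1, 3)) (S2 : 'M[F]_(m2, 3)) :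
  \rank S1 = 1 -> \rank S2 = 2 -> (S1 <= S2)%MS ->
  (forall Y, comm_mx X Y -> stablemx S1 Y /\ stablemx S2 Y) -> commutant_trig X.
Proof.
move=> rS1 rS2 S12 S_stable; set v0 := nz_row S1.
have v0_nz : v0 != 0 by rewrite nz_row_eq0 -mxrank_eq0 rS1.
have S1v0 : (S1 <= v0)%MS := rank1_submx_rV rS1 (nz_row_sub S1) v0_nz.
have /row_subPn[i v1_v0] : ~~ (S2 <= v0)%MS.
  by apply/negP => /mxrankS; rewrite rS2 rank_rV v0_nz.
set v1 := row i S2 in v1_v0.
have v01S2 : (v0 + v1 <= S2)%MS.
  by rewrite addsmx_sub row_sub (submx_trans (nz_row_sub S1)).
have S2v01 : (S2 <= v0 + v1)%MS.
  rewrite -(mxrank_leqif_sup v01S2).2 eqn_leq mxrankS //= rS2.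
  by have := mxrank_adds_gt v1_v0; rewrite rank_rV v0_nz.
have /row_subPn[j v2_v01] : ~~ (1%:M <= v0 + v1)%MS.
  apply/negP => /mxrankS; rewrite mxrank1 => /leq_trans/(_ (mxrankS v01S2)).
  by rewrite rS2.
exists (rows3 v0 v1 (row j 1%:M)); first exact: rows3_unit.
move=> Y /S_stable[S1Y S2Y]; apply: rows3_trig; first exact: rows3_unit.
  exact: submx_trans (submxMr Y (nz_row_sub S1)) (submx_trans S1Y S1v0).
exact: submx_trans (submxMr Y (row_sub i S2)) (submx_trans S2Y S2v01).
Qed.

End Flags.

(** * Non-scalar 3 x 3 matrices over a closed field *)

Section EigenvectorsCommutation.
Variables (F : fieldType) (n : nat).
Implicit Types (X Y Z : 'M[F]_n) (v : 'rV[F]_n).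

Lemma comm_mx_subl_scalar X Y a : comm_mx X Y -> comm_mx (X - a%:M) Y.
Proof. by move=> XY; rewrite /comm_mx mulmxBl mulmxBr XY scalar_mxC. Qed.

Lemma comm_mx_affine Z X Y a b k : k != 0 -> Y - b%:M = k *: (X - a%:M) ->
  comm_mx Z Y <-> comm_mx Z X.
Proof.
move=> k_nz YX.
have shift W c : comm_mx Z (W - c%:M) <-> comm_mx Z W.
  by rewrite /comm_mx mulmxBr mulmxBl scalar_mxC; split=> [/addIr | ->].
apply: iff_trans (iff_sym (shift Y b)) _; apply: iff_trans (shift X a).
by rewrite /comm_mx YX -scalemxAr -scalemxAl; split=> [/(scalerI k_nz) | ->].
Qed.

Lemma eigen_uniq v X e e' : v != 0 -> v *m X = e *: v -> v *m X = e' *: v -> e = e'.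
Proof.
move=> v_nz -> /eqP; rewrite -subr_eq0 -scalerBl scaler_eq0 (negPf v_nz) orbF.
by rewrite subr_eq0 => /eqP.
Qed.

Lemma eigen_shift v X e a : v *m X = e *: v -> v *m (X - a%:M) = (e - a) *: v.
Proof. by move=> vX; rewrite mulmxBr vX mul_mx_scalar scalerBl. Qed.

Lemma eigen_submx v X e : v *m X = e *: v -> e != 0 -> (v <= X)%MS.
Proof.
move=> vX e_nz; apply/submxP; exists (e^-1 *: v).
by rewrite -scalemxAl vX scalerA mulVf // scale1r.
Qed.

Lemma unitmx_eigen_nz v X e : X \in unitmx -> v != 0 -> v *m X = e *: v -> e != 0.
Proof.
move=> Xu v_nz vX; apply: contraNneq v_nz => e0.
by rewrite -(mulmxK Xu v) vX e0 scale0r mul0mx.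
Qed.

Lemma eigenvalue_rank X a : eigenvalue X a -> (\rank (X - a%:M)%R < n)%N.
Proof. by rewrite /eigenvalue /eigenspace -mxrank_eq0 mxrank_ker subn_eq0 -ltnNge. Qed.

End EigenvectorsCommutation.

Lemma closed_eigenvalue (F : closedFieldType) n (X : 'M[F]_n.+1) :
  exists a, eigenvalue X a.
Proof.
have /closed_rootP[a] : size (char_poly X) != 1 by rewrite size_char_poly.
by rewrite -eigenvalue_root_char; exists a.
Qed.

Section Classification.
Variable F : fieldType.
Implicit Types X Y : 'M[F]_3.

(* [X] is similar to [diag_mx (l, l, m)]. *)
Definition diag_llm X l m :=
  [/\ l != m, \rank (X - l%:M) = 1 & (X - l%:M) *m (X - m%:M) = 0].

Lemma rank1_diag_llm_or_trig X l : \rank (X - l%:M) = 1 ->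
  (exists m, diag_llm X l m) \/ commutant_trig X.
Proof.
set N := X - l%:M => rN; set a := nz_row N.
have a_nz : a != 0 by rewrite nz_row_eq0 -mxrank_eq0 rN.
have Na : (N <= a)%MS := rank1_submx_rV rN (nz_row_sub N) a_nz.
have [t aN] : exists t, a *m N = t *: a by apply/sub_rVP/(submx_trans (submxMl a N)).
have NN : N *m N = t *: N.
  by have [D ND] := submxP Na; rewrite {1}ND -mulmxA aN -scalemxAr -ND.
have [t0 | t_nz] := eqVneq t 0.
  right; apply: (flag_commutant_trig (S1 := N) (S2 := kermx N)) => //.
  - by rewrite mxrank_ker rN.
  - by apply/sub_kermxP; rewrite NN t0 scale0r.
  move=> Y /(comm_mx_subl_scalar l) NY.
  by split; [apply: comm_mx_stable | apply: comm_mx_stable_ker].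
left; exists (l + t); split => //; first by rewrite eq_sym -subr_eq0 addrAC subrr add0r.
have -> : X - (l + t)%:M = N - t%:M by rewrite raddfD opprD addrA.
by rewrite mulmxBr NN mul_mx_scalar subrr.
Qed.

Lemma rank2_nonsemisimple_trig X l : \rank (X - l%:M) = 2 ->
  \rank ((X - l%:M) *m (X - l%:M)) != 2 -> commutant_trig X.
Proof.
set N := X - l%:M => rN rNN.
have rNN1 : \rank (N *m N) = 1.
  have NN_nz : N *m N != 0.
    by apply/eqP => /sub_kermxP/mxrankS; rewrite mxrank_ker rN.
  move: (mxrankM_maxl N N) rNN NN_nz; rewrite rN -mxrank_eq0.
  by case: (\rank _) => [|[|[|]]].
apply: (flag_commutant_trig (S1 := kermx N) (S2 := kermx (N *m N))).
- by rewrite mxrank_ker rN.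
- by rewrite mxrank_ker rNN1.
- by apply/sub_kermxP; rewrite mulmxA mulmx_ker mul0mx.
move=> Y /(comm_mx_subl_scalar l)/comm_mx_sym YN.
by split; apply: comm_mx_stable_ker; apply/comm_mx_sym => //; apply: comm_mxM.
Qed.

Lemma two_eigen_rank2_trig X l m : l != m ->
  \rank (X - l%:M) = 2 -> \rank (X - m%:M) = 2 -> commutant_trig X.
Proof.
move=> lm rL rM; set K := kermx (X - l%:M); set K' := kermx (X - m%:M).
have KK' : (K :&: K')%MS = 0.
  have /sub_kermxP CL := capmxSl K K'; have /sub_kermxP CM := capmxSr K K'.
  have : (m - l) *: (K :&: K')%MS = 0.
    have e : (X - l%:M) - (X - m%:M) = (m - l)%:M.
      by rewrite opprB addrC addrA subrK raddfB.
    by rewrite -mul_mx_scalar -e mulmxBr CL CM subrr.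
  by move/eqP; rewrite scaler_eq0 subr_eq0 eq_sym (negPf lm) => /eqP.
apply: (flag_commutant_trig (S1 := K) (S2 := (K + K')%MS)).
- by rewrite mxrank_ker rL.
- by rewrite mxrank_disjoint_sum // !mxrank_ker rL rM.
- exact: addsmxSl.
move=> Y XY; have KY := comm_mx_stable_ker (comm_mx_subl_scalar l XY).
by have K'Y := comm_mx_stable_ker (comm_mx_subl_scalar m XY); split; rewrite ?stableDmx.
Qed.

End Classification.

Lemma other_eigenvalue (F : closedFieldType) (X : 'M[F]_3) l :
  \rank (X - l%:M) = 2 -> \rank ((X - l%:M) *m (X - l%:M)) = 2 ->
  exists2 m, m != l & eigenvalue X m.
Proof.
set N := X - l%:M => rN rNN.
have [r charX] := closed_field_poly_normal (char_poly X).
rewrite (monicP (char_poly_monic X)) scale1r in charX.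
(* Were l the only root, Cayley-Hamilton would give N^3 = 0, although N^2 has
   the same row space as N. *)
have [/all_pred1P r_l | ] := boolP (all (pred1 l) r); last first.
  rewrite -has_predC => /hasP[m mr ml]; exists m => //.
  by rewrite eigenvalue_root_char charX root_prod_XsubC.
have size_r : size r = 3.
  by have := size_char_poly X; rewrite charX size_prod_XsubC => -[].
have N3 := Cayley_Hamilton X.
rewrite charX r_l size_r big_nseq /= !rmorphM rmorph1 /= rmorphB /= in N3.
rewrite horner_mx_X horner_mx_C -/N mulr1 -!mulmxE in N3.
have NNN : (N <= N *m N)%MS.
  by rewrite -(mxrank_leqif_sup (submxMl N N)).2 rNN rN.
by have := mxrankS (submxMr N NNN); rewrite -mulmxA N3 mxrank0 rNN.
Qed.

Lemma nonscalar_diag_llm_or_trig (F : closedFieldType) (X : 'M[F]_3) :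
  (forall c, X != c%:M) -> (exists l m, diag_llm X l m) \/ commutant_trig X.
Proof.
move=> X_nscalar.
have rank12 c : eigenvalue X c -> \rank (X - c%:M) = 1 \/ \rank (X - c%:M) = 2.
  move/eigenvalue_rank; have : \rank (X - c%:M) != 0 by rewrite mxrank_eq0 subr_eq0.
  by case: (\rank _) => [|[|[|]]] //; auto.
have rank1_case c : \rank (X - c%:M) = 1 ->
    (exists l m, diag_llm X l m) \/ commutant_trig X.
  by case/rank1_diag_llm_or_trig => [[m]|]; [left; exists c, m | right].
have [l /rank12[/rank1_case // | rL]] := closed_eigenvalue X.
have [rNN | ] := eqVneq (\rank ((X - l%:M) *m (X - l%:M))) 2; last first.
  by right; apply: rank2_nonsemisimple_trig rL _.
have [m ml /rank12[/rank1_case // | rM]] := other_eigenvalue rL rNN.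
by right; apply: (two_eigen_rank2_trig _ rL rM); rewrite eq_sym.
Qed.

Section DiagLLM.
Variables (F : fieldType) (X : 'M[F]_3) (l m : F).
Hypothesis llmX : diag_llm X l m.

Lemma diag_llm_eigenvalue (v : 'rV[F]_3) t : v != 0 -> v *m X = t *: v ->
  t = l \/ t = m.
Proof.
case: llmX => _ _ XX v_nz vX.
have : v *m ((X - l%:M) *m (X - m%:M)) = 0 by rewrite XX mulmx0.
rewrite mulmxA (eigen_shift l vX) -scalemxAl (eigen_shift m vX) scalerA.
move/eqP; rewrite scaler_eq0 (negPf v_nz) orbF mulf_eq0 !subr_eq0.
by case/orP => /eqP; auto.
Qed.

Lemma diag_llm_im_eigenvector :
  nz_row (X - l%:M) != 0 /\ nz_row (X - l%:M) *m X = m *: nz_row (X - l%:M).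
Proof.
case: llmX => _ rX XX; split; first by rewrite nz_row_eq0 -mxrank_eq0 rX.
have [D ->] := submxP (nz_row_sub (X - l%:M)).
by apply/eqP; rewrite -subr_eq0 -mul_mx_scalar -mulmxBr -mulmxA XX mulmx0.
Qed.

Lemma diag_llm_im_stable Y : comm_mx X Y ->
  exists s, nz_row (X - l%:M) *m Y = s *: nz_row (X - l%:M).
Proof.
case: llmX => _ rX _ /(comm_mx_subl_scalar l)/comm_mx_stable XY.
apply/sub_rVP; apply: submx_trans (rank1_submx_rV rX _ diag_llm_im_eigenvector.1).
  exact: submx_trans (submxMr Y (nz_row_sub _)) XY.
exact: nz_row_sub.
Qed.

Lemma diag_llm_unit_nz : X \in unitmx -> l != 0 /\ m != 0.
Proof.
case: llmX => _ rX _ Xu; split.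
  by apply/eqP => l0; move: rX; rewrite l0 raddf0 subr0 mxrank_unit.
by have [a_nz aX] := diag_llm_im_eigenvector; apply: unitmx_eigen_nz Xu a_nz aX.
Qed.

Lemma diag_llm_ker_im_full : (1%:M <= kermx (X - l%:M) + (X - l%:M))%MS.
Proof.
case: llmX => lm _ XX.
have -> : 1%:M = (l - m)^-1 *: ((X - m%:M) - (X - l%:M)).
  rewrite opprB [X - _ + _]addrC addrA subrK -raddfB scale_scalar_mx.
  by rewrite mulVf // subr_eq0.
apply/scalemx_sub/addmx_sub_adds; last by rewrite eqmx_opp.
have XlXm : comm_mx (X - l%:M) (X - m%:M).
  by apply/comm_mx_subl_scalar/comm_mx_sym/comm_mx_subl_scalar.
by apply/sub_kermxP; rewrite -XlXm.
Qed.

End DiagLLM.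

(** * Commuting matrices similar to diag(l, l, m) *)

Section CommutingDiagLLM.
Variables (F : fieldType) (X Y : 'M[F]_3) (l m x y : F).
Hypotheses (XY : comm_mx X Y) (llmX : diag_llm X l m) (llmY : diag_llm Y x y).

Lemma diag_llm_affine (c : 'rV[F]_3) : c != 0 -> c *m X = m *: c -> c *m Y = y *: c ->
  exists2 k, k != 0 & Y - x%:M = k *: (X - l%:M).
Proof.
move=> c_nz cX cY; have [lm rX _] := llmX; have [xy rY _] := llmY.
set NX := X - l%:M in rX *; set NY := Y - x%:M in rY *; set K := kermx NX.
have ml : m - l != 0 by rewrite subr_eq0 eq_sym.
have yx : y - x != 0 by rewrite subr_eq0 eq_sym.
have cNX : c *m NX = (m - l) *: c := eigen_shift l cX.
have cNY : c *m NY = (y - x) *: c := eigen_shift x cY.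
have NXc : (NX <= c)%MS := rank1_submx_rV rX (eigen_submx cNX ml) c_nz.
have NYc : (NY <= c)%MS := rank1_submx_rV rY (eigen_submx cNY yx) c_nz.
exists ((y - x) / (m - l)); first by rewrite mulf_neq0 ?invr_eq0.
(* W vanishes on ker NX and on im NX = <c>, which together span the space. *)
apply/eqP; rewrite -subr_eq0 -submx0; set W := NY - _ *: NX.
have KNY : K *m NY = 0.
  have [E KE] := submxP (submx_trans (submxMl K NY) NYc).
  have : (m - l) *: (K *m NY) = 0.
    have NYX : comm_mx NY NX.
      exact/comm_mx_subl_scalar/comm_mx_sym/comm_mx_subl_scalar.
    by rewrite KE scalemxAr -cNX mulmxA -KE -mulmxA NYX mulmxA mulmx_ker mul0mx.
  by move/eqP; rewrite scaler_eq0 (negPf ml) => /eqP.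
have KW : K *m W = 0 by rewrite mulmxBr KNY -scalemxAr mulmx_ker scaler0 subr0.
have NXW : NX *m W = 0.
  have [D ->] := submxP NXc; rewrite -mulmxA mulmxBr -scalemxAr cNX cNY scalerA.
  by rewrite divfK // subrr mulmx0.
rewrite -[W]mul1mx (submx_trans (submxMr W (diag_llm_ker_im_full llmX))) //.
by rewrite addsmxMr KW NXW adds0mx.
Qed.

Lemma diag_llm_comm_cases :
  (exists2 k, k != 0 & Y - x%:M = k *: (X - l%:M)) \/
  exists2 P, P \in unitmx &
    P *m X *m invmx P = diag_mx (\row_(i < 3) [:: l; l; m]`_i) /\
    P *m Y *m invmx P = diag_mx (\row_(i < 3) [:: x; y; x]`_i).
Proof.
have [a_nz aX] := diag_llm_im_eigenvector llmX.
have [b_nz bY] := diag_llm_im_eigenvector llmY.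
have [s aY] := diag_llm_im_stable llmX XY.
have [t bX] := diag_llm_im_stable llmY (comm_mx_sym XY).
set a := nz_row _ in a_nz aX aY; set b := nz_row _ in b_nz bY bX.
have [tl | tm] := diag_llm_eigenvalue llmX b_nz bX; last first.
  by left; apply: (diag_llm_affine b_nz); rewrite -?tm.
have [sx | sy] := diag_llm_eigenvalue llmY a_nz aY; last first.
  by left; apply: (diag_llm_affine a_nz); rewrite -?sy.
rewrite {}tl in bX; rewrite {}sx in aY; right.
have [lm rX _] := llmX; have [xy rY _] := llmY.
set K := eigenspace X l; set K' := eigenspace Y x.
have cap_nz : (K :&: K')%MS != 0.
  rewrite -mxrank_eq0; have := mxrank_sum_cap K K'.
  by have := rank_leq_col (K + K')%MS; rewrite !mxrank_ker rX rY; lia.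
set c := nz_row (K :&: K')%MS.
have c_nz : c != 0 by rewrite nz_row_eq0.
have /eigenspaceP cX : (c <= K)%MS := submx_trans (nz_row_sub _) (capmxSl _ _).
have /eigenspaceP cY : (c <= K')%MS := submx_trans (nz_row_sub _) (capmxSr _ _).
have Pu : rows3 c b a \in unitmx.
  apply: rows3_unit => //.
    apply/negP => /sub_rVP[r br].
    have bYx : b *m Y = x *: b.
      by rewrite br -scalemxAl cY scalerA mulrC -scalerA -br.
    by rewrite (eigen_uniq b_nz bYx bY) eqxx in xy.
  apply/negP => a_cb; have /eigenspaceP aXl : (a <= K)%MS.
    apply: submx_trans a_cb _; rewrite addsmx_sub.
    by apply/andP; split; apply/eigenspaceP.
  by rewrite (eigen_uniq a_nz aXl aX) eqxx in lm.
by exists (rows3 c b a) => //; split; apply: rows3_diag.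
Qed.

End CommutingDiagLLM.

Lemma rep_diag_llm (G : group) (F : closedFieldType) (rho : G -> 'M[F]_3) a :
  faithful_rep rho -> ~ soluble (centraliser a) -> ~ (forall g, centraliser a g) ->
  exists l m, diag_llm (rho a) l m.
Proof.
move=> rho_f nsol ncentral.
have nscalar c : rho a != c%:M.
  apply/eqP => ac; apply: ncentral => g; apply/(rep_centraliser rho_f).
  by rewrite ac; apply: comm_mx_scalar.
by case: (nonscalar_diag_llm_or_trig nscalar) => // /(commutant_trig_soluble rho_f).
Qed.

Theorem corollary2p2 (G : group) (A B : G)
  (F : closedFieldType) (rho : G -> 'M[F]_3)
  (hAB : gmul A B = gmul B A)
  (hA_ne : ~ (forall g : G, centraliser A g))
  (hB_ne : ~ (forall g : G, centraliser B g))
  (hA_ns : ~ soluble (centraliser A))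
  (hB_ns : ~ soluble (centraliser B))
  (hAB_ne : ~ (forall g : G, centraliser A g <-> centraliser B g))
  (hrho : faithful_rep rho) :
  exists (P : 'M[F]_3) (lam mu x y : F),
    P \in unitmx /\ lam != 0 /\ mu != 0 /\ x != 0 /\ y != 0 /\
    lam != mu /\ x != y /\
    P *m rho A *m invmx P = diag_mx (\row_(i < 3) [:: lam; lam; mu]`_i) /\
    P *m rho B *m invmx P = diag_mx (\row_(i < 3) [:: x; y; x]`_i).
Proof.
have [l [m llmA]] := rep_diag_llm hrho hA_ns hA_ne.
have [x [y llmB]] := rep_diag_llm hrho hB_ns hB_ne.
have [l_nz m_nz] := diag_llm_unit_nz llmA (rep_unit hrho A).
have [x_nz y_nz] := diag_llm_unit_nz llmB (rep_unit hrho B).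
have AB : comm_mx (rho A) (rho B) by rewrite /comm_mx -!(repM hrho) hAB.
case: (diag_llm_comm_cases AB llmA llmB) => [[k k_nz BA] | [P Pu [PA PB]]].
  case: hAB_ne => g; rewrite !(rep_centraliser hrho).
  exact: iff_sym (comm_mx_affine _ k_nz BA).
have [lm _ _] := llmA; have [xy _ _] := llmB.
by exists P, l, m, x, y.
Qed.
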